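(* Let $\Gamma$ be a connected finite simple graph on $N\ge3$ vertices with minimum degree $d=2$ and $\varepsilon=\frac12$. If there exist distinct vertices $u\sim v\sim w$ with $\deg u=\deg v=2$ and $\deg w=3$, then $\Gamma$ is the $3$-book graph (the book graph on $8$ vertices).
   Context: For a finite simple graph $\Gamma=(V,E)$ without isolated vertices, $\deg v$ is the number of neighbours of $v$ and $\mathcal N(v)=\{w\in V: w\sim v\}$. The normalized Laplacian acts on functions $f:V\to\mathbb R$ by $\Delta f(v)=f(v)-\frac{1}{\deg v}\sum_{w\sim v}f(w)$; its eigenvalues are $0=\lambda_1\le\lambda_2\le\dots\le\lambda_N$, and $\varepsilon:=\min_i|1-\lambda_i|$. $d$ denotes the minimum vertex degree. The $m$-book graph ($m\ge1$) has vertex set $\{x,y,v_1,\dots,v_m,w_1,\dots,w_m\}$ and edges $\{x,v_i\},\{y,w_i\},\{v_i,w_i\}$ for $i=1,\dots,m$. *)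

From mathcomp Require Import all_boot all_order all_algebra.
From mathcomp Require Import reals.
Set Implicit Arguments. Unset Strict Implicit. Unset Printing Implicit Defensive.
Import Order.TTheory GRing.Theory Num.Theory.

Definition simple_graph (n : nat) (adj : rel 'I_n) : Prop :=
  symmetric adj /\ irreflexive adj.

Definition connected_graph (n : nat) (adj : rel 'I_n) : Prop :=
  forall u v : 'I_n, connect adj u v.

Definition deg (n : nat) (adj : rel 'I_n) (v : 'I_n) : nat :=
  #|[pred w | adj v w]|.

Definition min_degree_is (n : nat) (adj : rel 'I_n) (d : nat) : Prop :=
  (forall v, d <= deg adj v)%N /\ exists v, deg adj v = d.

Local Open Scope ring_scope.

Definition nlap (R : realType) (n : nat) (adj : rel 'I_n) (f : 'I_n -> R)
  (v : 'I_n) : R :=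
  f v - ((deg adj v)%:R)^-1 * \sum_(w | adj v w) f w.

Definition nlap_eigenvalue (R : realType) (n : nat) (adj : rel 'I_n) (lam : R)
  : Prop :=
  exists f : 'I_n -> R, (exists v, f v != 0) /\
    forall v, nlap adj f v = lam * f v.

Definition eps_is (R : realType) (n : nat) (adj : rel 'I_n) (e : R) : Prop :=
  (forall lam, nlap_eigenvalue adj lam -> e <= `|1 - lam|) /\
  (exists lam, nlap_eigenvalue adj lam /\ `|1 - lam| = e).

Local Close Scope ring_scope.

(* The m-book graph on vertex set 'I_(2m+2):
   x = 0, y = 1, v_i = 1 + i, w_i = 1 + m + i  (i = 1..m);
   edges {x,v_i}, {y,w_i}, {v_i,w_i}. *)
Definition book_edge (m : nat) (a b : nat) : bool :=
  [|| (a == 0) && (2 <= b <= m.+1),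
      (a == 1) && (m.+2 <= b <= (2 * m).+1)
    | (2 <= a <= m.+1) && (b == a + m)].

Definition book_adj (m : nat) : rel 'I_(2 * m + 2) :=
  fun a b => book_edge m a b || book_edge m b a.

Definition iso_book (n : nat) (adj : rel 'I_n) (m : nat) : Prop :=
  exists f : 'I_n -> 'I_(2 * m + 2),
    bijective f /\ forall a b, adj a b = @book_adj m (f a) (f b).

(* If every eigenvalue of the normalized Laplacian satisfies |1 - lambda| >= 1/2, then every
   eigenvalue of the symmetric matrix D^-1/2 A D^-1/2, which is similar to I - Delta, has
   absolute value at least 1/2, so by the spectral theorem |D^-1/2 A D^-1/2 h| >= |h| / 2.
   With h = D^1/2 g this says that every function g on the vertices satisfies
     1/4 * sum_x deg x * g x ^ 2 <= sum_x (sum_(y ~ x) g y) ^ 2 / deg x.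
   Starting from the path u - v - w, the neighbourhoods are determined one vertex at a time:
   every configuration other than the 3-book violates this inequality for a test function
   supported on at most four vertices with known neighbourhoods, the unknown degrees only
   entering through 1 / deg <= 1/2.  Once the eight vertices of the 3-book have all their
   neighbours among themselves, connectedness leaves no room for further vertices. *)

From mathcomp Require Import all_boot all_order all_algebra.
From mathcomp Require Import reals.
From mathcomp Require Import complex.
From mathcomp Require Import ring lra.
Set Implicit Arguments. Unset Strict Implicit. Unset Printing Implicit Defensive.
Import Order.TTheory GRing.Theory Num.Theory Num.Def.

Section RealSymmetricMatrix.
Local Open Scope ring_scope.
Local Open Scope sesquilinear_scope.
Variable R : rcfType.
Local Notation toC := (real_complex R).

Lemma conj_real_complex (x : R) : conjC (toC x) = toC x.
Proof. by apply: conj_Creal; rewrite /= complex_real. Qed.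

Lemma Re_mulr_real (z : R[i]) (x : R) : complex.Re (z * toC x) = complex.Re z * x.
Proof. by case: z => a b /=; rewrite mulr0 subr0. Qed.

Lemma Im_mulr_real (z : R[i]) (x : R) : complex.Im (z * toC x) = complex.Im z * x.
Proof. by case: z => a b /=; rewrite mulr0 add0r mulrC. Qed.

Lemma real_eigenvector_of_complex n (S : 'M[R]_n) (mu : R) (r : 'rV[R[i]]_n) :
  r != 0 -> r *m map_mx toC S = toC mu *: r ->
  exists2 s : 'rV[R]_n, s != 0 & s *m S = mu *: s.
Proof.
move=> r_neq0 rS.
have eigen_part (p : {additive Rcomplex R -> R}) :
    (forall z x, p (z * toC x) = p z * x) -> map_mx p r *m S = mu *: map_mx p r.
  move=> pM; apply/rowP => k; move/rowP/(_ k)/(congr1 p): rS.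
  rewrite !mxE raddf_sum mulrC pM mulrC => <-.
  by apply: eq_bigr => j _; rewrite !mxE pM.
have [Re0|Re_neq0] := eqVneq (map_mx (@complex.Re R) r) 0; last first.
  exists (map_mx (@complex.Re R) r) => //.
  exact: (eigen_part (@complex.Re R : {additive Rcomplex R -> R})) Re_mulr_real.
have [Im0|Im_neq0] := eqVneq (map_mx (@complex.Im R) r) 0; last first.
  exists (map_mx (@complex.Im R) r) => //.
  exact: (eigen_part (@complex.Im R : {additive Rcomplex R -> R})) Im_mulr_real.
case/negP: r_neq0; apply/eqP/rowP => j.
move/rowP/(_ j): Re0; move/rowP/(_ j): Im0; rewrite !mxE.
by case: (r 0 j) => a b /= -> ->.
Qed.

Lemma unitary_norm n (x : 'rV[R[i]]_n) (U : 'M_n) :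
  U \is unitarymx -> (x *m U) *m (x *m U)^t* = x *m x^t*.
Proof. by move=> U_unitary; rewrite trmx_mul map_mxM mulmxA mulmxtVK. Qed.

Lemma real_complex_norm n (x : 'rV[R]_n) :
  toC ((x *m x^T) 0 0) = (map_mx toC x *m (map_mx toC x)^t*) 0 0.
Proof.
rewrite !mxE rmorph_sum; apply: eq_bigr => j _.
by rewrite !mxE rmorphM conj_real_complex.
Qed.

Section Spectrum.
Variables (n : nat) (S : 'M[R]_n) (c : R).
Hypothesis S_sym : S^T = S.
Hypothesis eigen_ge :
  forall (mu : R) (s : 'rV_n), s != 0 -> s *m S = mu *: s -> c <= `|mu|.

Let SC := map_mx toC S.
Let U := spectralmx SC.
Let d := spectral_diag SC.

Lemma complexify_hermitian : SC \is hermsymmx.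
Proof.
apply/is_hermitianmxP; rewrite expr0 scale1r; apply/matrixP=> i j.
by rewrite !mxE conj_real_complex -[in RHS]S_sym mxE.
Qed.

Lemma complexify_spectral : SC = U^t* *m diag_mx d *m U.
Proof.
rewrite -invmx_unitary ?spectral_unitarymx //.
exact/orthomx_spectralP/hermitian_normalmx/complexify_hermitian.
Qed.

Lemma spectral_diag_real i : d 0 i = toC (complex.Re (d 0 i)).
Proof.
by rewrite RRe_real // (mxOverP (hermitian_spectral_diag_real complexify_hermitian)).
Qed.

Lemma spectral_diag_ge i : c <= `|complex.Re (d 0 i)|.
Proof.
have U_unitary : U \is unitarymx := spectral_unitarymx SC.
have [||s s_neq0 sS] := @real_eigenvector_of_complex _ S (complex.Re (d 0 i)) (row i U).
- apply/eqP => Ui0; move/unitarymxP/(congr1 (row i)): U_unitary.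
  rewrite row_mul Ui0 mul0mx => /rowP/(_ i); rewrite !mxE eqxx => /eqP.
  by rewrite eq_sym oner_eq0.
- rewrite -row_mul -/SC complexify_spectral !mulmxA (unitarymxP U_unitary) mul1mx.
  by apply/rowP => j; rewrite -spectral_diag_real mul_diag_mx !mxE.
exact: eigen_ge s_neq0 sS.
Qed.

Lemma sym_mx_norm_ge (h : 'rV[R]_n) : 0 <= c ->
  c ^+ 2 * (h *m h^T) 0 0 <= (h *m S *m (h *m S)^T) 0 0.
Proof.
move=> c_ge0; have U_unitary : U \is unitarymx := spectral_unitarymx SC.
pose k := map_mx toC h *m U^t*.
have hU : map_mx toC h = k *m U by rewrite mulmxKtV.
have hSU : map_mx toC (h *m S) = k *m diag_mx d *m U.
  by rewrite map_mxM -/SC complexify_spectral hU !mulmxA mulmxtVK.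
suff : toC c ^+ 2 * toC ((h *m h^T) 0 0) <= toC ((h *m S *m (h *m S)^T) 0 0).
  by rewrite -rmorphXn -rmorphM lecR.
rewrite !real_complex_norm hSU hU; clearbody k; rewrite !(unitary_norm _ U_unitary).
rewrite mul_mx_diag !mxE mulr_sumr; apply: ler_sum => j _.
rewrite !mxE [conjC (_ * _)]rmorphM [X in _ <= X]mulrACA [X in X <= _]mulrC.
apply: ler_wpM2l; first exact: mul_conjC_ge0.
rewrite spectral_diag_real /= conj_real_complex -rmorphM -rmorphXn lecR -expr2.
have := spectral_diag_ge j; set x := complex.Re _ => c_le_x.
by rewrite -[X in _ <= X]real_normK ?num_real // lerXn2r ?nnegrE ?normr_ge0.
Qed.

End Spectrum.
End RealSymmetricMatrix.

Section NormalizedAdjacency.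
Local Open Scope ring_scope.
Variables (R : realType) (n : nat) (adj : rel 'I_n) (e : R).
Hypothesis adj_sym : symmetric adj.
Hypothesis deg_gt0 : forall x, (0 < deg adj x)%N.

Let sdeg x : R := Num.sqrt (deg adj x)%:R.

Let sdeg_neq0 x : sdeg x != 0.
Proof. by rewrite gt_eqF // sqrtr_gt0 ltr0n deg_gt0. Qed.

Let sdegK x : sdeg x ^+ 2 = (deg adj x)%:R.
Proof. exact: sqr_sqrtr. Qed.

Definition nadj : 'M[R]_n := \matrix_(i, j) ((adj i j)%:R / (sdeg i * sdeg j)).

Lemma nadj_sym : nadj^T = nadj.
Proof. by apply/matrixP => i j; rewrite !mxE adj_sym [sdeg j * _]mulrC. Qed.

Lemma nadj_mul (h : 'rV[R]_n) x :
  (h *m nadj) 0 x = (sdeg x)^-1 * \sum_(y | adj x y) h 0 y / sdeg y.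
Proof.
rewrite mxE mulr_sumr [in RHS]big_mkcond /=; apply: eq_bigr => y _.
rewrite mxE adj_sym; case: (adj x y); last by rewrite mul0r mulr0.
by rewrite invfM mul1r mulrA mulrC mulrA.
Qed.

Lemma nadj_eigen_nlap (mu : R) (r : 'rV_n) :
  r *m nadj = mu *: r ->
  forall x, nlap adj (fun y => r 0 y / sdeg y) x = (1 - mu) * (r 0 x / sdeg x).
Proof.
move=> rS x; move/rowP/(_ x): rS; rewrite nadj_mul mxE => E.
rewrite /nlap -sdegK -[\sum_(y | _) _](mulVKf (sdeg_neq0 x)) E.
by field; rewrite sdeg_neq0.
Qed.

Hypothesis eps_ge : forall lam : R, nlap_eigenvalue adj lam -> e <= `|1 - lam|.

Lemma nadj_eigen_ge (mu : R) (r : 'rV_n) : r != 0 -> r *m nadj = mu *: r -> e <= `|mu|.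
Proof.
move=> r_neq0 rS; rewrite -[mu](subKr 1); apply: eps_ge.
exists (fun y => r 0 y / sdeg y); split; last exact: nadj_eigen_nlap.
have [y ry] : exists y, r 0 y != 0.
  apply/existsP; apply: contraR r_neq0 => /existsPn r0.
  by apply/eqP/rowP => y; rewrite mxE; apply/eqP/negPn/r0.
by exists y; rewrite mulf_neq0 ?invr_eq0.
Qed.

Lemma nlap_gap_ineq (g : 'I_n -> R) : 0 <= e ->
  e ^+ 2 * \sum_x (deg adj x)%:R * g x ^+ 2 <=
  \sum_x ((deg adj x)%:R)^-1 * (\sum_(y | adj x y) g y) ^+ 2.
Proof.
move=> e_ge0; pose h := \row_x (sdeg x * g x).
have hK y : h 0 y / sdeg y = g y by rewrite mxE mulrAC divff ?mul1r.
have -> : \sum_x (deg adj x)%:R * g x ^+ 2 = (h *m h^T) 0 0.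
  by rewrite mxE; apply: eq_bigr => x _; rewrite !mxE -sdegK; ring.
have -> : \sum_x ((deg adj x)%:R)^-1 * (\sum_(y | adj x y) g y) ^+ 2 =
    (h *m nadj *m (h *m nadj)^T) 0 0.
  rewrite mxE; apply: eq_bigr => x _; rewrite [_^T _ _]mxE nadj_mul.
  by rewrite (eq_bigr _ (fun y _ => hK y)) -sdegK; field.
exact: sym_mx_norm_ge nadj_sym nadj_eigen_ge h e_ge0.
Qed.

End NormalizedAdjacency.

Section Neighbourhoods.
Variables (n : nat) (adj : rel 'I_n).
Hypothesis adj_sym : symmetric adj.

Local Notation nbhd s L := (forall z, adj s z = (z \in L)).

Lemma nbhd_of_deg s (L : seq 'I_n) : uniq L -> all (adj s) L -> deg adj s = size L ->
  nbhd s L.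
Proof.
move=> uL aL dL z.
have sub : [pred y in L] \subset [pred y | adj s y] by apply/subsetP => y /(allP aL).
suff /(_ z) : [pred y in L] =i [pred y | adj s y] by rewrite !inE.
by apply/subset_cardP => //; rewrite -/(deg adj s) dL; apply/card_uniqP.
Qed.

Lemma exists_nbr_notin s (L : seq 'I_n) : (size L < deg adj s)%N ->
  exists2 y, adj s y & y \notin L.
Proof.
move=> ltL; have [sub | /subsetPn[y sy yL]] := boolP ([pred y | adj s y] \subset L).
  by move: (leq_trans (subset_leq_card sub) (card_size L)); rewrite leqNgt ltL.
by exists y.
Qed.

Lemma nbhd_extend s (L : seq 'I_n) : uniq L -> all (adj s) L -> deg adj s = (size L).+1 ->
  exists y, [/\ adj s y, y \notin L & nbhd s (rcons L y)].
Proof.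
move=> uL aL dL; have [|y sy yL] := @exists_nbr_notin s L; first by rewrite dL.
exists y; split=> //; apply: nbhd_of_deg; rewrite ?size_rcons //.
- by rewrite rcons_uniq yL.
- by rewrite all_rcons sy.
Qed.

Lemma nbhd_subset s (Ls L : seq 'I_n) : nbhd s Ls -> all (mem L) Ls ->
  forall z, adj s z -> z \in L.
Proof. by move=> N /allP sub z; rewrite N => /sub. Qed.

Lemma connected_closed_mem (T : seq 'I_n) x : connected_graph adj -> x \in T ->
  (forall y, y \in T -> forall z, adj y z -> z \in T) -> forall z, z \in T.
Proof.
move=> conn xT closedT; have clT : closed adj (mem T).
  by move=> y z yz; apply/idP/idP => [/closedT|/closedT]; apply; rewrite // adj_sym.
by move=> z; rewrite -(closed_connect clT (conn x z)).
Qed.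

Lemma iso_book_of_enum m (T : seq 'I_n) x0 : uniq T -> (forall z, z \in T) ->
  size T = (2 * m + 2)%N ->
  (forall i j : 'I_(2 * m + 2), adj (nth x0 T i) (nth x0 T j) = book_adj i j) ->
  iso_book adj m.
Proof.
move=> uT allT sizeT edges.
have idx z : (index z T < 2 * m + 2)%N by rewrite -sizeT index_mem.
pose f z : 'I_(2 * m + 2) := Ordinal (idx z).
pose g (i : 'I_(2 * m + 2)) := nth x0 T i.
have fK : cancel f g by move=> z; rewrite /g /= nth_index.
have gK : cancel g f by move=> i; apply: val_inj; rewrite /= index_uniq ?sizeT.
by exists f; split=> [|p q]; [exists g | rewrite -edges -/(g (f p)) -/(g (f q)) !fK].
Qed.

End Neighbourhoods.

Section ThreeBook.
Local Open Scope ring_scope.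
Variables (R : realType) (n : nat) (adj : rel 'I_n).
Hypothesis adj_sym : symmetric adj.
Hypothesis adj_irr : irreflexive adj.
Hypothesis deg_ge2 : forall x, (2 <= deg adj x)%N.
Hypothesis gap : forall g : 'I_n -> R,
  (1 / 2) ^+ 2 * \sum_x (deg adj x)%:R * g x ^+ 2 <=
  \sum_x ((deg adj x)%:R)^-1 * (\sum_(y | adj x y) g y) ^+ 2.

Local Notation nbhd s L := (forall z, adj s z = (z \in L)).

Lemma inv_deg_le x k : (k.+1 <= deg adj x)%N -> ((deg adj x)%:R)^-1 <= k.+1%:R^-1 :> R.
Proof.
by move=> le_k; rewrite lef_pV2 ?posrE ?ltr0n ?ler_nat // (leq_trans _ le_k).
Qed.

Lemma inv_deg_le_half x : ((deg adj x)%:R)^-1 <= 2%:R^-1 :> R.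
Proof. exact: inv_deg_le. Qed.

Lemma test_function_refute (L : seq 'I_n) (g : 'I_n -> R) : uniq L ->
  (forall y, g y != 0 -> y \in L) ->
  (forall y, g y != 0 -> forall z, adj y z -> z \in L) ->
  \sum_(x <- L) ((deg adj x)%:R)^-1 * (\sum_(y <- L) (adj x y)%:R * g y) ^+ 2 <
  (1 / 2) ^+ 2 * \sum_(x <- L) (deg adj x)%:R * g x ^+ 2 -> False.
Proof.
move=> uL supp_g nbhd_g; apply/negP; rewrite -leNgt.
have g0 y : y \notin L -> g y = 0 by move=> yL; apply: contraNeq yL; apply: supp_g.
have sumL (F : 'I_n -> R) : (forall x, x \notin L -> F x = 0) ->
    \sum_x F x = \sum_(x <- L) F x.
  move=> F0; rewrite (big_uniq _ uL) [RHS]big_mkcond; apply: eq_bigr => x _.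
  by case: ifPn => // /F0.
have inner x : \sum_(y | adj x y) g y = \sum_(y <- L) (adj x y)%:R * g y.
  rewrite -sumL => [|y /g0 ->]; last by rewrite mulr0.
  by rewrite big_mkcond; apply: eq_bigr => y _; case: adj; rewrite ?mul1r ?mul0r.
have := gap g; rewrite (sumL (fun x => _ * g x ^+ 2)) => [|x /g0 ->]; last first.
  by rewrite expr0n mulr0.
rewrite (sumL (fun x => _ * (\sum_(y | adj x y) g y) ^+ 2)) => [|x xL]; last first.
  rewrite big1 ?expr0n ?mulr0 // => y xy; apply/eqP; apply: contraNT xL => gy.
  by apply: nbhd_g gy _ _; rewrite adj_sym.
by move/le_trans; apply; apply: ler_sum => x _; rewrite inner.
Qed.

Fixpoint test_fun (ws : seq ('I_n * R)) (y : 'I_n) : R :=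
  if ws is (x, a) :: ws' then (if y == x then a else test_fun ws' y) else 0.

Ltac split_neq := repeat match goal with H : is_true (_ && _) |- _ => case/andP: H => ? ? end.

Ltac simpl_eq := repeat match goal with
  | H : is_true (?a != ?b) |- context [?a == ?b] => rewrite (negbTE H)
  | H : is_true (?a != ?b) |- context [?b == ?a] => rewrite [b == a]eq_sym (negbTE H)
  end; rewrite ?eqxx /=.

Ltac rewrite_adj := repeat match goal with
  | N : forall z, adj ?s z = _ |- context [adj ?s ?x] => rewrite (N x)
  | N : forall z, adj ?s z = _ |- context [adj ?x ?s] => rewrite (adj_sym x s) (N x)
  end.

Ltac split_uniq H := move: (H); rewrite /= ?inE ?negb_or => ?; split_neq.
Ltac uniq_tac := rewrite /= ?inE ?negb_or; simpl_eq.
Ltac adj_tac := rewrite /=; rewrite_adj; rewrite ?inE; simpl_eq.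

Ltac neq_from_adj H :=
  let E := fresh "E" in apply/eqP => E; move: H; rewrite E ?adj_irr //; adj_tac.

Ltac fresh_neqs y H L := lazymatch L with
  | ?x :: ?L' => (have : y != x by neq_from_adj H); move=> ?; fresh_neqs y H L'
  | _ => idtac end.

Ltac nbhd_tac := match goal with |- forall z, is_true (adj ?s z) -> _ =>
  match goal with N : forall z, adj s z = _ |- _ =>
    apply: (nbhd_subset N); by rewrite /= !inE !eqxx ?(orbT, orTb) end end.

Ltac add_inv_deg_bounds L := lazymatch L with
  | ?x :: ?L' => move: (inv_deg_le_half x); add_inv_deg_bounds L'
  | _ => idtac end.

(* [refute_with ws] contradicts [gap] for the test function with values [ws].  The [uniq]
   list in context must contain the support and, through [nbhd] hypotheses, all neighbours
   of the support; [gap] then becomes a linear inequality in the unknown 1 / deg x, each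
   bounded by 1 / 2 or by a hypothesis [k.+1 <= deg x]. *)
Tactic Notation "refute_with" uconstr(ws) :=
  match goal with uL : is_true (uniq ?L) |- False =>
  refine (@test_function_refute L (test_fun ws) uL _ _ _);
  [ move=> y /=; repeat case: ifP => [/eqP -> _|_]; rewrite ?inE ?eqxx ?orbT //
  | move=> y /=; repeat case: ifP => [/eqP -> _|_]; (try by rewrite eqxx);
    nbhd_tac
  | split_uniq uL; add_inv_deg_bounds L;
    repeat match goal with H : is_true (S _ <= deg adj _)%N |- _ =>
      move: (inv_deg_le H); clear H end;
    rewrite !big_cons !big_nil /=; simpl_eq; adj_tac;
    repeat match goal with H : deg adj ?x = _ |- context [deg adj ?x] => rewrite H end;
    rewrite ?(mulr0, addr0, mul0r, add0r); lra ]
  end.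

(* Vertex names: u - v - w is the given path, a is the other neighbour of u, b and c
   those of w, a1 and a2 those of a; primed vertices are further neighbours. *)
Lemma no_triangle_hi u v w c : uniq [:: u; v; w; c] ->
  nbhd u [:: v; w] -> nbhd v [:: w; u] -> nbhd w [:: v; u; c] ->
  deg adj u = 2%N -> deg adj v = 2%N -> deg adj w = 3%N -> (3 <= deg adj c)%N -> False.
Proof. by move=> *; refute_with [:: (u, 1); (v, 1); (w, -1)]. Qed.

Lemma no_triangle_lo u v w c c' : uniq [:: u; v; w; c; c'] ->
  nbhd u [:: v; w] -> nbhd v [:: w; u] -> nbhd w [:: v; u; c] -> nbhd c [:: w; c'] ->
  deg adj u = 2%N -> deg adj v = 2%N -> deg adj w = 3%N -> deg adj c = 2%N -> False.
Proof. by move=> *; refute_with [:: (u, 1); (v, 1); (w, -1); (c, -1)]. Qed.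

Lemma no_square u v w b c : uniq [:: u; v; w; b; c] ->
  nbhd u [:: v; b] -> nbhd w [:: v; b; c] ->
  deg adj u = 2%N -> deg adj v = 2%N -> deg adj w = 3%N -> False.
Proof. by move=> *; refute_with [:: (u, 1); (w, -1)]. Qed.

Lemma no_deg_a_ge4 u v w a b c : uniq [:: u; v; w; a; b; c] ->
  nbhd u [:: v; a] -> nbhd w [:: v; b; c] ->
  deg adj u = 2%N -> deg adj v = 2%N -> deg adj w = 3%N -> (4 <= deg adj a)%N -> False.
Proof. by move=> *; refute_with [:: (u, 2); (w, -1)]. Qed.

Lemma no_deg_a_eq2 u v w a a' : uniq [:: u; v; w; a; a'] ->
  nbhd v [:: w; u] -> nbhd a [:: u; a'] ->
  deg adj u = 2%N -> deg adj v = 2%N -> deg adj w = 3%N -> deg adj a = 2%N -> False.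
Proof. by move=> *; refute_with [:: (v, 1); (a, -1)]. Qed.

Lemma no_a_adj_b u v w a b c a' : uniq [:: u; v; w; a; b; c; a'] ->
  nbhd u [:: v; a] -> nbhd v [:: w; u] -> nbhd w [:: v; b; c] -> nbhd a [:: u; b; a'] ->
  deg adj u = 2%N -> deg adj v = 2%N -> deg adj w = 3%N -> deg adj a = 3%N -> False.
Proof. by move=> *; refute_with [:: (u, -1); (v, 1); (w, 1); (a, -1)]. Qed.

Lemma no_a_adj_bc u v w a b c : uniq [:: u; v; w; a; b; c] ->
  nbhd w [:: v; b; c] -> nbhd a [:: u; b; c] ->
  deg adj u = 2%N -> deg adj v = 2%N -> deg adj w = 3%N -> deg adj a = 3%N -> False.
Proof. by move=> *; refute_with [:: (w, -1); (a, 1)]. Qed.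

Lemma no_deg_b_ge3 u v w a b c : uniq [:: u; v; w; a; b; c] ->
  nbhd u [:: v; a] -> nbhd w [:: v; b; c] ->
  deg adj u = 2%N -> deg adj v = 2%N -> deg adj w = 3%N -> deg adj a = 3%N ->
  (3 <= deg adj b)%N -> False.
Proof. by move=> *; refute_with [:: (u, 1); (w, -1)]. Qed.

Lemma no_b_nbr_outside u v w a b a1 a2 b' : uniq [:: u; v; w; a; b; a1; a2; b'] ->
  nbhd v [:: w; u] -> nbhd a [:: u; a1; a2] -> nbhd b [:: w; b'] ->
  deg adj u = 2%N -> deg adj v = 2%N -> deg adj w = 3%N -> deg adj a = 3%N ->
  deg adj b = 2%N -> False.
Proof. by move=> *; refute_with [:: (v, -2); (a, 1); (b, 1)]. Qed.

Lemma no_b_adj_c u v w a b c : uniq [:: u; v; w; a; b; c] ->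
  nbhd u [:: v; a] -> nbhd v [:: w; u] -> nbhd w [:: v; b; c] -> nbhd b [:: w; c] ->
  deg adj u = 2%N -> deg adj v = 2%N -> deg adj w = 3%N -> deg adj b = 2%N -> False.
Proof. by move=> *; refute_with [:: (u, -1); (v, 1); (w, 1); (b, -1)]. Qed.

Lemma no_deg_a1_ge3 u v w b a1 : uniq [:: u; v; w; b; a1] ->
  nbhd v [:: w; u] -> nbhd b [:: w; a1] ->
  deg adj u = 2%N -> deg adj v = 2%N -> deg adj w = 3%N -> deg adj b = 2%N ->
  (3 <= deg adj a1)%N -> False.
Proof. by move=> *; refute_with [:: (v, 1); (b, -1)]. Qed.

Lemma no_deg_c_ge3 u v w a b c a1 : uniq [:: u; v; w; a; b; c; a1] ->
  nbhd u [:: v; a] -> nbhd w [:: v; b; c] -> nbhd a1 [:: b; a] ->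
  deg adj u = 2%N -> deg adj v = 2%N -> deg adj w = 3%N -> deg adj a = 3%N -> deg adj b = 2%N ->
  deg adj a1 = 2%N -> (3 <= deg adj c)%N -> False.
Proof. by move=> *; refute_with [:: (u, 1); (w, -1); (a1, 1)]. Qed.

Lemma no_c_nbr_outside u v w a b c a1 a2 c' : uniq [:: u; v; w; a; b; c; a1; a2; c'] ->
  nbhd v [:: w; u] -> nbhd a [:: u; a1; a2] -> nbhd b [:: w; a1] -> nbhd c [:: w; c'] ->
  deg adj u = 2%N -> deg adj v = 2%N -> deg adj w = 3%N -> deg adj a = 3%N -> deg adj b = 2%N ->
  deg adj c = 2%N -> deg adj a1 = 2%N -> False.
Proof. by move=> *; refute_with [:: (v, -1); (a, 1); (b, -1); (c, 1)]. Qed.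

Lemma no_deg_a2_ge3 u v w a b c a1 a2 : uniq [:: u; v; w; a; b; c; a1; a2] ->
  nbhd v [:: w; u] -> nbhd a [:: u; a1; a2] -> nbhd b [:: w; a1] -> nbhd c [:: w; a2] ->
  deg adj u = 2%N -> deg adj v = 2%N -> deg adj w = 3%N -> deg adj a = 3%N -> deg adj b = 2%N ->
  deg adj c = 2%N -> (3 <= deg adj a2)%N -> False.
Proof. by move=> *; refute_with [:: (v, 1); (a, -1); (b, 1); (c, -1)]. Qed.

Lemma deg_eq2 x : ~~ (3 <= deg adj x)%N -> deg adj x = 2%N.
Proof. by rewrite -ltnNge ltnS => le2; apply/eqP; rewrite eqn_leq le2 deg_ge2. Qed.

Lemma nbhd_swap s x y z : nbhd s [:: x; y; z] -> nbhd s [:: x; z; y].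
Proof. by move=> N t; rewrite N !inE [(t == y) || _]orbC. Qed.

Definition book3_config := exists x y v1 v2 v3 w1 w2 w3,
  [/\ uniq [:: x; y; v1; v2; v3; w1; w2; w3],
      nbhd x [:: v1; v2; v3], nbhd y [:: w1; w2; w3],
      [/\ nbhd v1 [:: x; w1], nbhd v2 [:: x; w2] & nbhd v3 [:: x; w3]] &
      [/\ nbhd w1 [:: v1; y], nbhd w2 [:: v2; y] & nbhd w3 [:: v3; y]]].

Lemma config_of_b_adj_a1 u v w a b c a1 a2 : uniq [:: u; v; w; a; b; c; a1; a2] ->
  nbhd u [:: v; a] -> nbhd v [:: w; u] -> nbhd w [:: v; b; c] ->
  nbhd a [:: u; a1; a2] -> nbhd b [:: w; a1] ->
  deg adj u = 2%N -> deg adj v = 2%N -> deg adj w = 3%N -> deg adj a = 3%N ->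
  deg adj b = 2%N -> book3_config.
Proof.
move=> uL Nu Nv Nw Na Nb du dv dw da db; split_uniq uL.
have [?|/deg_eq2 da1] := boolP (3 <= deg adj a1)%N.
  by case: (no_deg_a1_ge3 _ Nv Nb) => //; uniq_tac.
have Na1 : nbhd a1 [:: b; a] by apply: nbhd_of_deg; [uniq_tac | adj_tac | rewrite da1].
have [?|/deg_eq2 dc] := boolP (3 <= deg adj c)%N.
  by case: (no_deg_c_ge3 _ Nu Nw Na1) => //; uniq_tac.
have [c' [cc' c'w Nc]] : exists c', [/\ adj c c', c' \notin [:: w] & nbhd c [:: w; c']].
  by apply: nbhd_extend; rewrite ?dc //; adj_tac.
rewrite mem_seq1 in c'w; move: Nc; fresh_neqs c' cc' [:: u; v; a; b; c; a1]; move=> Nc.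
have [?|?] := eqVneq c' a2; last first.
  by case: (no_c_nbr_outside _ Nv Na Nb Nc) => //; uniq_tac.
subst c'.
have [?|/deg_eq2 da2] := boolP (3 <= deg adj a2)%N.
  by case: (no_deg_a2_ge3 _ Nv Na Nb Nc) => //; uniq_tac.
have Na2 : nbhd a2 [:: c; a] by apply: nbhd_of_deg; [uniq_tac | adj_tac | rewrite da2].
by exists w, a, v, b, c, u, a1, a2; split => //; uniq_tac.
Qed.

Lemma config_of_deg_a3 u v w a b c a1 a2 : uniq [:: u; v; w; a; b; c; a1; a2] ->
  nbhd u [:: v; a] -> nbhd v [:: w; u] -> nbhd w [:: v; b; c] -> nbhd a [:: u; a1; a2] ->
  deg adj u = 2%N -> deg adj v = 2%N -> deg adj w = 3%N -> deg adj a = 3%N -> book3_config.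
Proof.
move=> uL Nu Nv Nw Na du dv dw da; split_uniq uL.
have [?|/deg_eq2 db] := boolP (3 <= deg adj b)%N.
  by case: (no_deg_b_ge3 _ Nu Nw) => //; uniq_tac.
have [b' [bb' b'w Nb]] : exists b', [/\ adj b b', b' \notin [:: w] & nbhd b [:: w; b']].
  by apply: nbhd_extend; rewrite ?db //; adj_tac.
rewrite mem_seq1 in b'w; move: Nb; fresh_neqs b' bb' [:: u; v; a; b]; move=> Nb.
have [?|?] := eqVneq b' c.
  by subst b'; case: (no_b_adj_c _ Nu Nv Nw Nb) => //; uniq_tac.
have [?|?] := eqVneq b' a1.
  by subst b'; apply: (config_of_b_adj_a1 _ Nu Nv Nw Na Nb).
have [?|?] := eqVneq b' a2.
  by subst b'; apply: (config_of_b_adj_a1 _ Nu Nv Nw (nbhd_swap Na) Nb) => //; uniq_tac.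
by case: (no_b_nbr_outside _ Nv Na Nb) => //; uniq_tac.
Qed.

Lemma config_of_abc u v w a b c : uniq [:: u; v; w; a; b; c] ->
  nbhd u [:: v; a] -> nbhd v [:: w; u] -> nbhd w [:: v; b; c] ->
  deg adj u = 2%N -> deg adj v = 2%N -> deg adj w = 3%N -> book3_config.
Proof.
move=> uL Nu Nv Nw du dv dw; split_uniq uL.
case: (ltngtP (deg adj a) 3) => [lt3|gt3|da].
- have da : deg adj a = 2%N by apply: deg_eq2; rewrite -ltnNge.
  have [a' [aa' a'u Na]] : exists a', [/\ adj a a', a' \notin [:: u] & nbhd a [:: u; a']].
    by apply: nbhd_extend; rewrite ?da //; adj_tac.
  rewrite mem_seq1 in a'u; move: Na; fresh_neqs a' aa' [:: v; w; a]; move=> Na.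
  by case: (no_deg_a_eq2 _ Nv Na) => //; uniq_tac.
- by case: (no_deg_a_ge4 _ Nu Nw) => //; uniq_tac.
have [|a1 aa1 a1u] := @exists_nbr_notin _ adj a [:: u]; first by rewrite da.
rewrite mem_seq1 in a1u; fresh_neqs a1 aa1 [:: v; w; a].
have [a2 [aa2 a2ua1 Na]] : exists a2, [/\ adj a a2, a2 \notin [:: u; a1] & nbhd a [:: u; a1; a2]].
  by apply: nbhd_extend; rewrite /= ?aa1 ?da //; uniq_tac; adj_tac.
rewrite !inE negb_or in a2ua1; case/andP: a2ua1 => ? ?.
move: Na; fresh_neqs a2 aa2 [:: v; w; a]; move=> Na.
have Nw' := nbhd_swap Nw.
have [?|?] := eqVneq a1 b.
  subst a1; have [?|?] := eqVneq a2 c.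
    by subst a2; case: (no_a_adj_bc _ Nw Na) => //; uniq_tac.
  by case: (no_a_adj_b _ Nu Nv Nw Na) => //; uniq_tac.
have [?|?] := eqVneq a1 c.
  subst a1; have [?|?] := eqVneq a2 b.
    by subst a2; case: (no_a_adj_bc _ Nw' Na) => //; uniq_tac.
  by case: (no_a_adj_b _ Nu Nv Nw' Na) => //; uniq_tac.
have Na' := nbhd_swap Na.
have [?|?] := eqVneq a2 b.
  by subst a2; case: (no_a_adj_b _ Nu Nv Nw Na') => //; uniq_tac.
have [?|?] := eqVneq a2 c.
  by subst a2; case: (no_a_adj_b _ Nu Nv Nw' Na') => //; uniq_tac.
by apply: (config_of_deg_a3 _ Nu Nv Nw Na); uniq_tac.
Qed.

Lemma no_triangle u v w : uniq [:: u; v; w] ->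
  nbhd u [:: v; w] -> nbhd v [:: w; u] ->
  deg adj u = 2%N -> deg adj v = 2%N -> deg adj w = 3%N -> False.
Proof.
move=> uL Nu Nv du dv dw; split_uniq uL.
have [c [wc cvu Nw]] : exists c, [/\ adj w c, c \notin [:: v; u] & nbhd w [:: v; u; c]].
  by apply: nbhd_extend; rewrite ?dw //; [uniq_tac | adj_tac].
rewrite !inE negb_or in cvu; case/andP: cvu => ? ?.
move: Nw; fresh_neqs c wc [:: w]; move=> Nw.
have [?|/deg_eq2 dc] := boolP (3 <= deg adj c)%N.
  by case: (no_triangle_hi _ Nu Nv Nw) => //; uniq_tac.
have [c' [cc' c'w Nc]] : exists c', [/\ adj c c', c' \notin [:: w] & nbhd c [:: w; c']].
  by apply: nbhd_extend; rewrite ?dc //; adj_tac.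
rewrite mem_seq1 in c'w; move: Nc; fresh_neqs c' cc' [:: u; v; c]; move=> Nc.
by case: (no_triangle_lo _ Nu Nv Nw Nc) => //; uniq_tac.
Qed.

Lemma config_of_path u v w : uniq [:: u; v; w] -> adj u v -> adj v w ->
  deg adj u = 2%N -> deg adj v = 2%N -> deg adj w = 3%N -> book3_config.
Proof.
move=> uL uv vw du dv dw; split_uniq uL.
have Nv : nbhd v [:: w; u].
  by apply: nbhd_of_deg; rewrite /= ?vw ?(adj_sym v u) ?uv ?dv //; uniq_tac.
have [a [ua av Nu]] : exists a, [/\ adj u a, a \notin [:: v] & nbhd u [:: v; a]].
  by apply: nbhd_extend; rewrite /= ?uv ?du.
rewrite mem_seq1 in av; move: Nu; fresh_neqs a ua [:: u]; move=> Nu.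
have [?|?] := eqVneq a w.
  by subst a; case: (no_triangle _ Nu Nv) => //; uniq_tac.
have [|b wb bv] := @exists_nbr_notin _ adj w [:: v]; first by rewrite dw.
rewrite mem_seq1 in bv; fresh_neqs b wb [:: u; w].
have [c [wc cvb Nw]] : exists c, [/\ adj w c, c \notin [:: v; b] & nbhd w [:: v; b; c]].
  by apply: nbhd_extend; rewrite /= ?wb ?dw ?(adj_sym w v) ?vw //; uniq_tac.
rewrite !inE negb_or in cvb; case/andP: cvb => ? ?.
move: Nw; fresh_neqs c wc [:: u; w]; move=> Nw.
have [?|?] := eqVneq a b.
  by subst a; case: (no_square _ Nu Nw) => //; uniq_tac.
have [?|?] := eqVneq a c.
  by subst a; case: (no_square _ Nu (nbhd_swap Nw)) => //; uniq_tac.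
by apply: (config_of_abc _ Nu Nv Nw); uniq_tac.
Qed.

Lemma iso_book_of_config : connected_graph adj -> book3_config -> iso_book adj 3%N.
Proof.
move=> conn [x [y [v1 [v2 [v3 [w1 [w2 [w3 [uT Nx Ny [Nv1 Nv2 Nv3] [Nw1 Nw2 Nw3]]]]]]]]]].
split_uniq uT; apply: (iso_book_of_enum (m := 3%N) (x0 := x) uT) => [|//|]; last first.
  by case=> [[|[|[|[|[|[|[|[|i]]]]]]]] Hi] //; case=> [[|[|[|[|[|[|[|[|j]]]]]]]] Hj] //;
    rewrite /book_adj /book_edge /=; adj_tac.
apply: (connected_closed_mem adj_sym conn (mem_head _ _)) => s.
rewrite !inE => sT; repeat (case/orP: sT => [/eqP -> | sT]); try move/eqP: sT => ->.
all: nbhd_tac.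
Qed.

End ThreeBook.

Theorem mainTheorem11 (R : realType) (n : nat) (adj : rel 'I_n) :
  simple_graph adj ->
  connected_graph adj ->
  (3 <= n)%N ->
  min_degree_is adj 2 ->
  eps_is adj (1 / 2 : R)%R ->
  (exists u v w : 'I_n,
      [/\ u != v, v != w, u != w, adj u v & adj v w] /\
      [/\ deg adj u = 2, deg adj v = 2 & deg adj w = 3]) ->
  iso_book adj 3.
Proof.
(* [3 <= n] also follows from the three distinct vertices u, v, w. *)
move=> [adj_sym adj_irr] conn _ [deg_ge2 _] [eps_ge _].
move=> [u [v [w [[uv vw uw uv_adj vw_adj] [du dv dw]]]]].
have deg_gt0 x : (0 < deg adj x)%N by apply: leq_trans (deg_ge2 x).
have half_ge0 : (0 <= 1 / 2 :> R)%R by rewrite mul1r invr_ge0 ler0n.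
have gap g := nlap_gap_ineq adj_sym deg_gt0 eps_ge g half_ge0.
apply: (iso_book_of_config adj_sym adj_irr conn).
apply: (config_of_path adj_sym adj_irr deg_ge2 gap _ uv_adj vw_adj du dv dw).
by rewrite /= !inE negb_or uv uw vw.
Qed.
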